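(* Let $\{\mathcal{T}_n\}_{n\ge K}$ be a $K$-type CMRT with type probabilities $p_1,\dots,p_K$ and attachment probabilities $(q_{ij})$, and for $k\ge0$ let $N_k(n)$ be the number of vertices of out-degree $k$ in $\mathcal{T}_n$. Then for each fixed $k$, $N_k(n)/n\to c_k$ in probability as $n\to\infty$, where $$c_k=\sum_{i=1}^K\frac{p_i}{1+r_i}\left(\frac{r_i}{1+r_i}\right)^k,\qquad r_i=\frac{1}{p_i}\sum_{j=1}^K p_jq_{ji},$$ and when $p_i=0$ the $i$-th term of $c_k$ is interpreted as $0$.
   Context: $K$-type Community Modulated Recursive Tree (CMRT): fix $K\ge 2$, a probability vector $(p_1,\dots,p_K)$ with $p_1=\max_i p_i>0$, and numbers $q_{ij}\ge 0$ with $\sum_{j=1}^K q_{ij}=1$ for each $i$. $\mathcal{T}_K$ is a uniform random recursive tree on vertices $\{1,\dots,K\}$ (a tree chosen uniformly among trees on these labels rooted at $1$ in which labels increase along paths from $1$), whose vertices are assigned the types $1,\dots,K$ via a uniform random permutation, so there is exactly one vertex of each type (the root of that type). For $n>K$, $\mathcal{T}_n$ is obtained from $\mathcal{T}_{n-1}$ by adding vertex $n$: (1) vertex $n$ is assigned type $i$ with probability $p_i$; (2) given its type $i$, it chooses to connect to type $j$ with probability $q_{ij}$; (3) it connects by an edge to an existing vertex of type $j$ chosen uniformly at random. All random choices are independent. Edges are directed from parent (earlier vertex) to child; the out-degree of a vertex is its number of children. *)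

From HB Require Import structures.
From mathcomp Require Import all_boot all_order all_algebra.
From mathcomp Require Import perm.
From mathcomp Require Import all_reals.
Set Implicit Arguments. Unset Strict Implicit. Unset Printing Implicit Defensive.
Import Order.TTheory GRing.Theory Num.Theory.
Local Open Scope ring_scope.

(* A configuration of a tree on vertices 0,...,n-1 (vertex m here is vertex
   m+1 of the paper): for each vertex its type and its parent (None for the
   root, Some v for parent v, where v < m). *)
Definition config (K : nat) := seq ('I_K * option nat).

Definition dist (R : Type) (K : nat) := seq (R * config K).

(* All recursive trees on vertices 0..m-1, as parent lists. *)
Fixpoint rec_trees (m : nat) : seq (seq (option nat)) :=
  match m with
  | 0 => [:: [::]]
  | m'.+1 =>
      if m' is 0 then [:: [:: None]]
      else flatten [seq [seq rcons t (Some v) | v <- iota 0 m'] | t <- rec_trees m']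
  end.

(* Law of T_K: uniform random recursive tree on K vertices, types given by a
   uniform random permutation of the K types. *)
Definition init_law (R : realType) (K : nat) : dist R K :=
  flatten [seq [seq ((#|{perm 'I_K}|%:R * (size (rec_trees K))%:R)^-1,
                     zip [seq s i | i <- enum 'I_K] t)
               | s : {perm 'I_K} <- enum {perm 'I_K}] | t <- rec_trees K].

Definition verts_of_type (K : nat) (c : config K) (j : 'I_K) : seq nat :=
  [seq x.1 | x <- zip (iota 0 (size c)) c & x.2.1 == j].

(* One growth step: new vertex gets type i w.p. p i, chooses type j w.p. q i j,
   attaches to a uniform existing vertex of type j. *)
Definition step (R : realType) (K : nat) (p : 'I_K -> R) (q : 'I_K -> 'I_K -> R)
  (d : dist R K) : dist R K :=
  flatten [seq
    flatten [seq flatten [seq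
      [seq (x.1 * p i * q i j / (size (verts_of_type x.2 j))%:R,
            rcons x.2 (i, Some v)) | v <- verts_of_type x.2 j]
      | j <- enum 'I_K] | i <- enum 'I_K]
    | x <- d].

(* Law of T_n, for n >= K. *)
Definition cmrt_law (R : realType) (K : nat) (p : 'I_K -> R)
  (q : 'I_K -> 'I_K -> R) (n : nat) : dist R K :=
  iter (n - K) (step p q) (init_law R K).

Definition cmrt_prob (R : realType) (K : nat) (p : 'I_K -> R)
  (q : 'I_K -> 'I_K -> R) (n : nat) (E : config K -> bool) : R :=
  \sum_(x <- cmrt_law p q n | E x.2) x.1.

Definition outdeg (K : nat) (c : config K) (v : nat) : nat :=
  count (fun e => e.2 == Some v) c.

Definition Nk (K : nat) (k : nat) (c : config K) : nat :=
  count (fun v => outdeg c v == k) (iota 0 (size c)).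

Definition rr (R : realType) (K : nat) (p : 'I_K -> R) (q : 'I_K -> 'I_K -> R)
  (i : 'I_K) : R := (\sum_j p j * q j i) / p i.

Definition ck (R : realType) (K : nat) (p : 'I_K -> R) (q : 'I_K -> 'I_K -> R)
  (k : nat) : R :=
  \sum_i (if p i == 0 then 0
          else p i / (1 + rr p q i) * (rr p q i / (1 + rr p q i)) ^+ k).

From HB Require Import structures.
From mathcomp Require Import all_boot all_order all_algebra.
From mathcomp Require Import perm.
From mathcomp Require Import all_reals.
From mathcomp Require Import ring lra.
Set Implicit Arguments. Unset Strict Implicit. Unset Printing Implicit Defensive.
Import Order.TTheory GRing.Theory Num.Theory.
Local Open Scope ring_scope.

(* Second-moment method.  Let M_j be the number of type-j vertices and N_{j,m}
   the number of those with out-degree m.  Given T_n, the new vertex has type j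
   with probability p_j and becomes a child of a given type-j vertex with
   probability a_j / M_j, where a_j = sum_i p_i q_ij = r_j p_j.  Hence
   Y = M_j - p_j n is a martingale with bounded increments, so E Y^2 = O(n).
   With c_{j,m} = p_j r_j^m / (1 + r_j)^(m+1), the fixed point of the mean
   dynamics, the drift of X_m = N_{j,m} - c_{j,m} n pulls it back towards 0 up to
   errors of order |X_{m-1}| + |Y|, whence
   E X_m(n+1)^2 <= E X_m(n)^2 + O(E |X_{m-1}(n)| + E |Y(n)|) + O(1),
   and by induction on m every E X_m(n)^2 is o(n^2).  (When p_j = 0, simply
   N_{j,m} <= M_j = Y.)  As N_k = sum_j N_{j,k} and c_k = sum_j c_{j,k},
   Chebyshev's inequality concludes. *)

Section Sums.
Variable R : pzRingType.

Lemma sumr_const_seq (T : Type) (s : seq T) (a : R) : \sum_(v <- s) a = (size s)%:R * a.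
Proof. by rewrite big_const_seq count_predT iter_addr_0 mulr_natl. Qed.

Lemma natr_count (T : Type) (P : pred T) (s : seq T) :
  (count P s)%:R = \sum_(v <- s) (P v)%:R :> R.
Proof. by elim: s => [|v s IH] /=; rewrite ?big_nil // big_cons natrD IH. Qed.

Lemma sum_indicator (I : finType) (i0 : I) (F : I -> R) :
  \sum_i (i == i0)%:R * F i = F i0.
Proof.
rewrite (bigD1 i0) //= eqxx mul1r big1 ?addr0 // => i /negbTE ->.
by rewrite mul0r.
Qed.

Lemma sum_indicator_seq (T : eqType) (s : seq T) (v : T) (F : T -> R) : uniq s ->
  \sum_(w <- s) (v == w)%:R * F w = (v \in s)%:R * F v.
Proof.
elim: s => [|w s IH] /=; first by rewrite big_nil mul0r.
case/andP => ws us; rewrite big_cons IH // in_cons.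
by case: eqVneq => [->|] /=; rewrite ?(negbTE ws) ?mul1r ?mul0r ?addr0 ?add0r.
Qed.

End Sums.

Lemma sqr_sum_le_card (R : realFieldType) (I : finType) (x : I -> R) :
  (\sum_i x i) ^+ 2 <= #|I|%:R * \sum_i x i ^+ 2.
Proof.
set S := \sum_i x i; set S2 := \sum_i x i ^+ 2.
have sum_cst (a : R) : \sum_(i : I) a = #|I|%:R * a by rewrite sumr_const mulr_natl.
have inner i : \sum_j (x i - x j) ^+ 2 = #|I|%:R * x i ^+ 2 - 2 * x i * S + S2.
  rewrite (eq_bigr (fun j => x i ^+ 2 - 2 * x i * x j + x j ^+ 2)) => [|j _]; last by ring.
  by rewrite big_split sumrB /= sum_cst -big_distrr.
have : 0 <= \sum_i \sum_j (x i - x j) ^+ 2 by do 2![apply: sumr_ge0 => ? _]; apply: sqr_ge0.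
rewrite (eq_bigr _ (fun i _ => inner i)) big_split sumrB /= sum_cst.
rewrite -big_distrr -big_distrl /=.
rewrite -big_distrr /= -/S -/S2 expr2; lra.
Qed.

Lemma norm_le_sqr_div_add (R : realFieldType) (z l : R) :
  0 < l -> `|z| <= l^-1 * z ^+ 2 + l.
Proof.
move=> l0; rewrite -(ler_pM2l l0) mulrDr mulrA mulfV ?gt_eqF // mul1r.
by rewrite -real_normK ?num_real //; have := normr_ge0 z; nra.
Qed.

Lemma zip_iota_nth (T : Type) (x0 : T) (s : seq T) :
  zip (iota 0 (size s)) s = [seq (w, nth x0 s w) | w <- iota 0 (size s)].
Proof.
apply: (@eq_from_nth _ (0%N, x0)); first by rewrite size_zip size_map size_iota minnn.
move=> w; rewrite size_zip size_iota minnn => ws.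
by rewrite nth_zip ?size_iota // (nth_map 0%N) ?size_iota // nth_iota.
Qed.

Section Expectation.
Variables (R : numDomainType) (T : eqType).
Implicit Types (d : seq (R * T)) (f g : T -> R).

Definition expect d f : R := \sum_(x <- d) x.1 * f x.2.

Definition subprob d := (forall x, x \in d -> 0 <= x.1) /\ expect d (fun=> 1) <= 1.

Lemma eq_expect_in d f g :
  (forall x, x \in d -> f x.2 = g x.2) -> expect d f = expect d g.
Proof. by move=> fg; apply: eq_big_seq => x /fg ->. Qed.

Lemma ler_expect_in d f g : (forall x, x \in d -> 0 <= x.1) ->
  (forall x, x \in d -> f x.2 <= g x.2) -> expect d f <= expect d g.
Proof.
move=> d0 fg; rewrite /expect big_seq_cond [leRHS]big_seq_cond.
by apply: ler_sum => x /andP[xd _]; rewrite ler_wpM2l ?d0 ?fg.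
Qed.

Lemma expectD d f g : expect d (fun c => f c + g c) = expect d f + expect d g.
Proof. by rewrite /expect -big_split; apply: eq_bigr => x _; rewrite mulrDr. Qed.

Lemma expectZ d a f : expect d (fun c => a * f c) = a * expect d f.
Proof. by rewrite /expect big_distrr; apply: eq_bigr => x _; rewrite mulrCA. Qed.

Lemma expect_cst d a : expect d (fun=> a) = a * expect d (fun=> 1).
Proof. by rewrite -expectZ; apply: eq_bigr => x _; rewrite mulr1. Qed.

Lemma expect_sum d (I : finType) (F : I -> T -> R) :
  expect d (fun c => \sum_i F i c) = \sum_i expect d (F i).
Proof. by rewrite /expect exchange_big; apply: eq_bigr => x _; rewrite big_distrr. Qed.

Lemma prob_le_expect d (E : pred T) Z : (forall x, x \in d -> 0 <= x.1) ->
  (forall c, 0 <= Z c) -> (forall x, x \in d -> E x.2 -> 1 <= Z x.2) ->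
  \sum_(x <- d | E x.2) x.1 <= expect d Z.
Proof.
move=> d0 Z0 EZ; rewrite big_mkcond /expect big_seq [leRHS]big_seq.
apply: ler_sum => x xd; case: ifP => Ex; last by rewrite mulr_ge0 ?d0.
by rewrite -{1}(mulr1 x.1) ler_wpM2l ?d0 ?EZ.
Qed.

End Expectation.

Section Asymptotics.
Variable R : realType.
Implicit Types (b e : nat -> R).

Definition sublinear b :=
  forall eps, 0 < eps -> exists N, forall n, (N <= n)%N -> b n <= eps * n%:R.

Definition subquadratic e :=
  forall eps, 0 < eps -> exists N, forall n, (N <= n)%N -> e n <= eps * n%:R ^+ 2.

Lemma sublinear0 : sublinear (fun=> 0).
Proof. by move=> eps eps0; exists 0%N => n _; rewrite mulr_ge0 // ltW. Qed.

Lemma sublinear_le b b' : (forall n, b n <= b' n) -> sublinear b' -> sublinear b.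
Proof.
move=> bb' hb' eps eps0; have [N hN] := hb' _ eps0.
by exists N => n /hN; apply: le_trans.
Qed.

Lemma sublinearD b1 b2 : sublinear b1 -> sublinear b2 ->
  sublinear (fun n => b1 n + b2 n).
Proof.
move=> h1 h2 eps eps0; have eps20 : 0 < eps / 2 by rewrite divr_gt0.
have [N1 H1] := h1 _ eps20; have [N2 H2] := h2 _ eps20.
exists (maxn N1 N2) => n; rewrite geq_max => /andP[/H1 n1 /H2 n2].
by rewrite [eps]splitr mulrDl lerD.
Qed.

Lemma sublinearZ k b : 0 <= k -> sublinear b -> sublinear (fun n => k * b n).
Proof.
move=> k0 hb eps eps0; have k1 : 0 < k + 1 by lra.
have [N hN] := hb _ (divr_gt0 eps0 k1).
exists N => n /hN bn; apply: (le_trans (ler_wpM2l k0 bn)).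
have epsn : 0 <= eps * n%:R by rewrite mulr_ge0 // ltW.
have -> : k * (eps / (k + 1) * n%:R) = k / (k + 1) * (eps * n%:R) by field; lra.
by apply: ler_piMl => //; rewrite ler_pdivrMr //; lra.
Qed.

Lemma subquadratic_le K0 e e' : (forall n, (K0 <= n)%N -> e n <= e' n) ->
  subquadratic e' -> subquadratic e.
Proof.
move=> ee' he' eps eps0; have [N hN] := he' _ eps0.
exists (maxn N K0) => n; rewrite geq_max => /andP[/hN en' /ee' en].
exact: le_trans en'.
Qed.

Lemma subquadraticD e1 e2 : subquadratic e1 -> subquadratic e2 ->
  subquadratic (fun n => e1 n + e2 n).
Proof.
move=> h1 h2 eps eps0; have eps20 : 0 < eps / 2 by rewrite divr_gt0.
have [N1 H1] := h1 _ eps20; have [N2 H2] := h2 _ eps20.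
exists (maxn N1 N2) => n; rewrite geq_max => /andP[/H1 n1 /H2 n2].
by rewrite [eps]splitr mulrDl lerD.
Qed.

Lemma subquadratic_sum (I : Type) (s : seq I) (E : I -> nat -> R) :
  (forall i, subquadratic (E i)) -> subquadratic (fun n => \sum_(i <- s) E i n).
Proof.
move=> hE; elim: s => [|i s IH].
  by move=> eps eps0; exists 0%N => n _; rewrite big_nil mulr_ge0 ?sqr_ge0 // ltW.
apply: (subquadratic_le (K0 := 0%N) _ (subquadraticD (hE i) IH)) => n _.
by rewrite big_cons.
Qed.

Lemma nat_ge_eventually (B : R) : exists N, forall n, (N <= n)%N -> B <= n%:R.
Proof.
case: (lerP 0 B) => B0; last by exists 0%N => n _; rewrite ltW // (lt_le_trans B0).
exists (Num.bound B) => n hn; rewrite ltW // (lt_le_trans (archi_boundP B0)) //.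
by rewrite ler_nat.
Qed.

Lemma le_quadratic_of_increments N0 e (a B : R) : 0 <= a -> 0 <= B ->
  (forall n, (N0 <= n)%N -> e n.+1 <= e n + a * n%:R + B) ->
  forall n, (N0 <= n)%N -> e n <= `|e N0| + B * n%:R + a * n%:R ^+ 2.
Proof.
move=> a0 B0 he n /subnKC <-; elim: (n - N0)%N => [|m IH].
  rewrite addn0 -addrA ler_wpDr ?ler_norm // addr_ge0 ?mulr_ge0 ?sqr_ge0 //.
rewrite addnS -natr1 (le_trans (he _ (leq_addr _ _))) //.
set x := (N0 + m)%:R in IH *; have x0 : 0 <= x by rewrite ler0n.
have ax0 : 0 <= a * x by rewrite mulr_ge0.
have -> : a * (x + 1) ^+ 2 = a * x ^+ 2 + a * x + a * x + a by ring.
rewrite mulrDr mulr1; lra.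
Qed.

Lemma subquadratic_of_increments K0 e b (C : R) :
  (forall n, (K0 <= n)%N -> e n.+1 <= e n + b n + C) -> sublinear b ->
  subquadratic e.
Proof.
move=> he hb eps eps0; have eps20 : 0 < eps / 2 by rewrite divr_gt0.
have [N1 hN1] := hb _ eps20; set N0 := maxn K0 N1.
have inc n : (N0 <= n)%N -> e n.+1 <= e n + eps / 2 * n%:R + `|C|.
  rewrite geq_max => /andP[/he en /hN1 bn]; have := ler_norm C; lra.
have bound := le_quadratic_of_increments (ltW eps20) (normr_ge0 C) inc.
have [N2 hN2] := nat_ge_eventually (2 * (`|e N0| + `|C|) / eps).
exists (maxn N0 (maxn N2 1)) => n.
rewrite geq_max => /andP[nN0]; rewrite geq_max => /andP[nN2 n1].
apply: (le_trans (bound n nN0)); set x := n%:R.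
have x1 : 1 <= x by rewrite ler1n.
have eC : `|e N0| + `|C| <= eps / 2 * x.
  by move: (hN2 n nN2); rewrite ler_pdivrMr //; lra.
have ex : (`|e N0| + `|C|) * x <= eps / 2 * x * x by rewrite ler_wpM2r //; lra.
have eN0 : `|e N0| <= `|e N0| * x by rewrite ler_peMr.
have -> : eps * x ^+ 2 = eps / 2 * x ^+ 2 + eps / 2 * x * x by rewrite expr2; field.
rewrite expr2; lra.
Qed.

Lemma expect_norm_sublinear (T : eqType) (d : nat -> seq (R * T)) (Z : T -> R) K0 :
  (forall n, (K0 <= n)%N -> subprob (d n)) ->
  subquadratic (fun n => expect (d n) (fun c => Z c ^+ 2)) ->
  sublinear (fun n => expect (d n) (fun c => `|Z c|)).
Proof.
move=> hd hZ eps eps0; have eps4 : 0 < eps ^+ 2 / 4 by rewrite divr_gt0 ?exprn_gt0.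
have [N hN] := hZ _ eps4.
exists (maxn N (maxn K0 1)) => n; rewrite !geq_max => /andP[nN /andP[nK0 n1]].
have [d0 d1] := hd n nK0; set x := n%:R; have x0 : 0 < x by rewrite ltr0n.
set l := eps * x / 2; have l0 : 0 < l by rewrite divr_gt0 ?mulr_gt0.
apply: (le_trans (ler_expect_in (g := fun c => l^-1 * Z c ^+ 2 + l) d0 _)).
  by move=> c _; apply: norm_le_sqr_div_add.
rewrite expectD expectZ expect_cst.
have e2 : l^-1 * (eps ^+ 2 / 4 * x ^+ 2) = l.
  by rewrite /l; field; rewrite -/x !gt_eqF.
have h2 : l^-1 * expect (d n) (fun c => Z c ^+ 2) <= l.
  by rewrite -[leRHS]e2 ler_wpM2l ?hN // invr_ge0 ltW.
have h3 : l * expect (d n) (fun=> 1) <= l by rewrite ler_piMr // ltW.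
have -> : eps * x = l + l by rewrite /l; field.
lra.
Qed.

End Asymptotics.

Section Configurations.
Variables (R : realType) (K : nat).
Implicit Types (c : config K) (i j : 'I_K).

(* The default [(j, None)] of [nth] is irrelevant, as [w < size c]. *)
Lemma verts_of_typeE c j :
  verts_of_type c j = [seq w <- iota 0 (size c) | (nth (j, None) c w).1 == j].
Proof.
by rewrite /verts_of_type (zip_iota_nth (j, None)) filter_map -map_comp map_id_in.
Qed.

Lemma mem_verts_of_type c j v :
  (v \in verts_of_type c j) = (v < size c)%N && ((nth (j, None) c v).1 == j).
Proof. by rewrite verts_of_typeE mem_filter mem_iota add0n andbC. Qed.

Lemma mem_verts_of_type_size c j v : v \in verts_of_type c j -> (v < size c)%N.
Proof. by rewrite mem_verts_of_type => /andP[]. Qed.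

Lemma mem_verts_of_type_eq c j j' v :
  v \in verts_of_type c j -> v \in verts_of_type c j' -> j = j'.
Proof.
rewrite !mem_verts_of_type => /andP[vc /eqP <-] /andP[_ /eqP <-].
by rewrite (set_nth_default (j', None) _ vc).
Qed.

Lemma uniq_verts_of_type c j : uniq (verts_of_type c j).
Proof. by rewrite verts_of_typeE filter_uniq // iota_uniq. Qed.

Lemma verts_of_type_rcons c e j : verts_of_type (rcons c e) j =
  if e.1 == j then rcons (verts_of_type c j) (size c) else verts_of_type c j.
Proof.
rewrite !verts_of_typeE size_rcons -addn1 iotaD add0n filter_cat /= nth_rcons ltnn eqxx.
rewrite (@eq_in_filter _ _ (fun w => (nth (j, None) c w).1 == j)) => [|w]; last first.
  by rewrite mem_iota add0n => /andP[_ wc]; rewrite nth_rcons wc.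
by case: (e.1 == j); rewrite ?cats1 ?cats0.
Qed.

Lemma outdeg_rcons c e w : outdeg (rcons c e) w = (outdeg c w + (e.2 == Some w))%N.
Proof. by rewrite /outdeg -cats1 count_cat /= addn0. Qed.

Definition wf_config c :=
  (forall j, (0 < size (verts_of_type c j))%N) /\
  (forall e v, e \in c -> e.2 = Some v -> (v < size c)%N).

Lemma outdeg_size c : wf_config c -> outdeg c (size c) = 0%N.
Proof.
case=> _ par; apply/eqP; rewrite -leqn0 leqNgt -has_count.
by apply/hasPn => e ec; apply/eqP => /(par _ _ ec); rewrite ltnn.
Qed.

Lemma wf_config_rcons c i j v : wf_config c -> v \in verts_of_type c j ->
  wf_config (rcons c (i, Some v)).
Proof.
case=> types par /mem_verts_of_type_size vc; split=> [j'|e w].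
  by rewrite verts_of_type_rcons; case: (i == j'); rewrite ?size_rcons.
rewrite mem_rcons in_cons size_rcons ltnS.
by case/orP=> [/eqP -> [<-]|ec /(par _ _ ec)]; apply: ltnW.
Qed.

Definition ntype j c : R := (size (verts_of_type c j))%:R.

Definition ndeg j m c : R := \sum_(v <- verts_of_type c j) (outdeg c v == m)%:R.

Definition ndeg_prev j m c : R := if m is m'.+1 then ndeg j m' c else 0.

Definition deg_gain m c v : R := ((outdeg c v).+1 == m)%:R - (outdeg c v == m)%:R.

Lemma ntype_rcons c i j v : ntype j (rcons c (i, Some v)) = ntype j c + (i == j)%:R.
Proof.
by rewrite /ntype verts_of_type_rcons /=; case: (i == j); rewrite ?size_rcons ?natr1 ?addr0.
Qed.

Lemma ndeg_rcons c i j j' m v : wf_config c -> v \in verts_of_type c j' ->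
  ndeg j m (rcons c (i, Some v)) =
  ndeg j m c + (i == j)%:R * (m == 0%N)%:R + (j' == j)%:R * deg_gain m c v.
Proof.
move=> wfc vj'; have vc := mem_verts_of_type_size vj'.
have old : \sum_(w <- verts_of_type c j) (outdeg (rcons c (i, Some v)) w == m)%:R =
    ndeg j m c + (j' == j)%:R * deg_gain m c v.
  rewrite (eq_bigr (fun w => (outdeg c w == m)%:R + (v == w)%:R * deg_gain m c w))
    => [|w _]; last first.
    rewrite outdeg_rcons /= (inj_eq (@Some_inj _)) /deg_gain.
    case: (eqVneq v w) => _ /=; last by rewrite mul0r addr0 addn0.
    by rewrite mul1r addn1 addrC subrK.
  rewrite big_split /= sum_indicator_seq ?uniq_verts_of_type //; congr (_ + _ * _).
  case: (eqVneq j' j) => [<-|j'j]; first by rewrite vj'.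
  case vj: (v \in verts_of_type c j) => //.
  by rewrite (mem_verts_of_type_eq vj' vj) eqxx in j'j.
rewrite {1}/ndeg verts_of_type_rcons /=; move: old.
case: (eqVneq i j) => [<-|_] old; last by rewrite old mul0r addr0.
rewrite -cats1 big_cat big_seq1 /= old outdeg_rcons outdeg_size //= mul1r.
rewrite (inj_eq (@Some_inj _)) (ltn_eqF vc).
by clear old; case: m => [|m] /=; rewrite ?addr0; ring.
Qed.

Lemma sum_deg_gain c j m :
  \sum_(v <- verts_of_type c j) deg_gain m c v = ndeg_prev j m c - ndeg j m c.
Proof.
rewrite sumrB; case: m => [|m] /=; first by rewrite big1.
by rewrite /ndeg; under eq_bigr => v _ do rewrite eqSS.
Qed.

Lemma norm_deg_gain_le1 m c v : `|deg_gain m c v| <= 1.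
Proof.
rewrite /deg_gain; case: (_.+1 == m); case: (_ == m);
  by rewrite ?subrr ?subr0 ?sub0r ?normrN ?normr0 ?normr1.
Qed.

Lemma ndeg_ge0 j m c : 0 <= ndeg j m c.
Proof. by apply: sumr_ge0 => v _; apply: ler0n. Qed.

Lemma ndeg_le_ntype j m c : ndeg j m c <= ntype j c.
Proof.
rewrite /ntype -[leRHS]mulr1 -sumr_const_seq.
by apply: ler_sum => v _; rewrite lern1 leq_b1.
Qed.

Lemma ndeg_prev_ge0 j m c : 0 <= ndeg_prev j m c.
Proof. by case: m => [|m] //=; apply: ndeg_ge0. Qed.

Lemma ndeg_prev_le_ntype j m c : ndeg_prev j m c <= ntype j c.
Proof. by case: m => [|m] /=; [apply: ler0n | apply: ndeg_le_ntype]. Qed.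

Lemma natr_Nk k c : (Nk k c)%:R = \sum_j ndeg j k c.
Proof.
rewrite /Nk natr_count.
have -> : iota 0 (size c) = unzip1 (zip (iota 0 (size c)) c).
  by rewrite unzip1_zip ?size_iota.
rewrite big_map.
under [RHS]eq_bigr => j _ do rewrite /ndeg big_map big_filter big_mkcond /=.
rewrite exchange_big /=; apply: eq_bigr => x _.
rewrite (eq_bigr (fun j => (j == x.2.1)%:R * (outdeg c x.1 == k)%:R)) ?sum_indicator //.
move=> j _.
by rewrite eq_sym; case: eqP => _; rewrite ?mul1r ?mul0r.
Qed.

End Configurations.

Arguments ntype {R K} j c.
Arguments ndeg {R K} j m c.
Arguments ndeg_prev {R K} j m c.
Arguments deg_gain {R K} m c v.

Section InitialLaw.
Variables (R : realType) (K : nat).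

Lemma rec_trees_wf m t : t \in rec_trees m ->
  size t = m /\ (forall o v, o \in t -> o = Some v -> (v < m)%N).
Proof.
elim: m t => [|m IH] t /=; first by rewrite inE => /eqP ->.
case: m IH => [|m] IH.
  by rewrite inE => /eqP -> /=; split => // o v; rewrite inE => /eqP ->.
case/flattenP => s /mapP[t' t't ->] /mapP[v vm ->].
have [t'm t'par] := IH t' t't; split; first by rewrite size_rcons t'm.
move=> o w; rewrite mem_rcons in_cons => /orP[/eqP -> [<-]|ot' /(t'par _ _ ot')].
  by move: vm; rewrite mem_iota add0n => /andP[_ /ltnW].
exact: ltnW.
Qed.

Lemma mem_init_law x : x \in init_law R K -> [/\ 0 <= x.1, wf_config x.2 & size x.2 = K].
Proof.
case/flattenP => s1 /mapP[t tK ->] /mapP[s _ ->] /=.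
have [tsz tpar] := rec_trees_wf tK.
have ssz : size [seq s i | i <- enum 'I_K] = K by rewrite size_map size_enum_ord.
have zsz : size (zip [seq s i | i <- enum 'I_K] t) = K by rewrite size_zip ssz tsz minnn.
split=> //; first by rewrite invr_ge0 mulr_ge0.
split=> [j|e v ez ev]; last first.
  rewrite zsz; apply: (tpar e.2) => //.
  by rewrite -[t](@unzip2_zip _ _ [seq s i | i <- enum 'I_K]) ?ssz ?tsz // map_f.
rewrite verts_of_typeE size_filter -has_count; apply/hasP.
exists (val ((s^-1)%g j)); first by rewrite mem_iota zsz add0n ltn_ord.
rewrite nth_zip ?ssz ?tsz //= (nth_map j) ?size_enum_ord ?ltn_ord //.
by rewrite nth_ord_enum permKV.
Qed.

Lemma expect_init_law1 : expect (init_law R K) (fun=> 1) <= 1.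
Proof.
set a : R := #|{perm 'I_K}|%:R; set b : R := (size (rec_trees K))%:R.
rewrite /expect /init_law big_flatten /= big_map.
rewrite (eq_bigr (fun=> (a * b)^-1 * (size (enum {perm 'I_K}))%:R)) => [|t _]; last first.
  rewrite big_map (eq_bigr (fun=> (a * b)^-1)) => [|s _]; last by rewrite mulr1.
  by rewrite sumr_const_seq mulrC.
rewrite sumr_const_seq -cardE -/a -/b.
have -> : b * ((a * b)^-1 * a) = (a * b) * (a * b)^-1 by ring.
by case: (eqVneq (a * b) 0) => [->|ab0]; rewrite ?mul0r ?ler01 ?mulfV.
Qed.

End InitialLaw.

(* With [u = N / M - g], [v = N' / M - g'], the left-hand side equals
   [a (u (N' - g' n) - u g' (M - n) - M u^2 + g (v - u) (M - n))]; the
   restoring term [- M u^2] is dropped and [|u|, |v| <= 1]. *)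
Lemma dev_mul_drift_le (R : realFieldType) (N N' M n g g' a : R) :
  0 <= N <= M -> 0 <= N' <= M -> 0 < M -> 0 <= g <= 1 -> 0 <= g' <= 1 -> 0 <= a ->
  (N - g * n) * (a * ((N' - N) / M - (g' - g))) <= a * (`|N' - g' * n| + 3 * `|M - n|).
Proof.
move=> /andP[N0 NM] /andP[N'0 N'M] M0 /andP[g0 g1] /andP[g'0 g'1] a0.
set u := N / M - g; set v := N' / M - g'.
have u1 : `|u| <= 1.
  have : N / M <= 1 by rewrite ler_pdivrMr ?mul1r.
  by have := divr_ge0 N0 (ltW M0); rewrite ler_norml /u => *; apply/andP; split; lra.
have v1 : `|v| <= 1.
  have : N' / M <= 1 by rewrite ler_pdivrMr ?mul1r.
  by have := divr_ge0 N'0 (ltW M0); rewrite ler_norml /v => *; apply/andP; split; lra.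
rewrite mulrCA; apply: ler_wpM2l => //.
have -> : (N - g * n) * ((N' - N) / M - (g' - g)) =
    u * (N' - g' * n) - u * g' * (M - n) - M * u ^+ 2 + g * (v - u) * (M - n).
  by rewrite /u /v; field; rewrite gt_eqF.
have bound (x y B : R) : `|x| <= B -> x * y <= B * `|y|.
  by move=> xB; rewrite (le_trans (ler_norm _)) // normrM ler_wpM2r.
have h1 := bound _ (N' - g' * n) _ u1.
have h2 : `|- (u * g')| <= 1 by rewrite normrN normrM (ger0_norm g'0) mulr_ile1.
have h3 := bound _ (M - n) _ h2.
have h4 : `|g * (v - u)| <= 2.
  rewrite normrM (ger0_norm g0) -[2]mul1r ler_pM //.
  by rewrite (le_trans (ler_normB _ _)) //; lra.
have h5 := bound _ (M - n) _ h4.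
have h6 : 0 <= M * u ^+ 2 by rewrite mulr_ge0 ?sqr_ge0 ?ltW.
lra.
Qed.

Section OneStep.
Variables (R : realType) (K : nat) (p : 'I_K -> R) (q : 'I_K -> 'I_K -> R).
Hypotheses (p_ge0 : forall i, 0 <= p i) (sum_p : \sum_i p i = 1)
  (q_ge0 : forall i j, 0 <= q i j) (sum_q : forall i, \sum_j q i j = 1).
Implicit Types (c : config K) (F G : config K -> R) (i j : 'I_K).

Definition step_mean F c : R :=
  \sum_i \sum_j \sum_(v <- verts_of_type c j)
    p i * q i j / ntype j c * F (rcons c (i, Some v)).

Lemma expect_step d F : expect (step p q d) F = expect d (step_mean F).
Proof.
rewrite /expect /step big_flatten /= big_map; apply: eq_bigr => x _.
rewrite big_flatten big_map big_enum /= big_distrr; apply: eq_bigr => i _.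
rewrite big_flatten big_map big_enum /= big_distrr; apply: eq_bigr => j _.
by rewrite big_map big_distrr; apply: eq_bigr => v _; rewrite /= !mulrA.
Qed.

Lemma mem_step d x : x \in step p q d -> exists y i j v,
  [/\ y \in d, v \in verts_of_type y.2 j &
      x = (y.1 * p i * q i j / ntype j y.2, rcons y.2 (i, Some v))].
Proof.
case/flattenP => s1 /mapP[y yd ->] /flattenP[s2 /mapP[i _ ->]].
by case/flattenP => s3 /mapP[j _ ->] /mapP[v vj ->]; exists y, i, j, v.
Qed.

Definition attach j : R := \sum_i p i * q i j.

Lemma attach_ge0 j : 0 <= attach j.
Proof. by apply: sumr_ge0 => i _; apply: mulr_ge0. Qed.

Lemma step_mean_decomp F c A (B : 'I_K -> R) (G : 'I_K -> nat -> R) :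
  (forall j, (0 < size (verts_of_type c j))%N) ->
  (forall i j v, v \in verts_of_type c j -> F (rcons c (i, Some v)) = A + B i + G j v) ->
  step_mean F c = A + \sum_i p i * B i +
    \sum_j attach j / ntype j c * \sum_(v <- verts_of_type c j) G j v.
Proof.
move=> types FE.
have inner i j :
    \sum_(v <- verts_of_type c j) p i * q i j / ntype j c * F (rcons c (i, Some v)) =
    p i * q i j * (A + B i) + p i * q i j / ntype j c * \sum_(v <- verts_of_type c j) G j v.
  rewrite (eq_big_seq (fun v => p i * q i j / ntype j c * (A + B i) +
      p i * q i j / ntype j c * G j v)) => [|v vj]; last by rewrite (FE i j v vj) mulrDr.
  rewrite big_split /= sumr_const_seq -big_distrr /=; congr (_ + _).
  by rewrite /ntype; field; rewrite pnatr_eq0 -lt0n.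
rewrite /step_mean; under eq_bigr => i _ do under eq_bigr => j _ do rewrite inner.
under eq_bigr => i _ do rewrite big_split /= -big_distrl /= -big_distrr /= sum_q mulr1.
rewrite big_split /= exchange_big /=; congr (_ + _).
  by rewrite (eq_bigr (fun i => A * p i + p i * B i)) => [|i _]; rewrite ?big_split /=
    -?big_distrr /= ?sum_p ?mulr1 // mulrDr mulrC.
by apply: eq_bigr => j _; rewrite /attach !big_distrl; apply: eq_bigr => i _.
Qed.

Lemma step_mean_le F G c :
  (forall i j v, v \in verts_of_type c j ->
    F (rcons c (i, Some v)) <= G (rcons c (i, Some v))) ->
  step_mean F c <= step_mean G c.
Proof.
move=> FG; apply: ler_sum => i _; apply: ler_sum => j _.
rewrite big_seq_cond [leRHS]big_seq_cond; apply: ler_sum => v /andP[vj _].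
by apply: ler_wpM2l; [rewrite divr_ge0 ?mulr_ge0 ?ler0n | exact: FG vj].
Qed.

Lemma step_mean1 c : (forall j, (0 < size (verts_of_type c j))%N) ->
  step_mean (fun=> 1) c = 1.
Proof.
move=> types.
rewrite (@step_mean_decomp _ _ 1 (fun=> 0) (fun _ _ => 0)) // => [|*]; last by rewrite !addr0.
rewrite big1 => [|i _]; last by rewrite mulr0.
by rewrite big1 => [|j _]; rewrite ?big1 ?mulr0 ?addr0.
Qed.

Lemma step_mean_sqr_le F c A (B : 'I_K -> R) (G : 'I_K -> nat -> R) D :
  (forall j, (0 < size (verts_of_type c j))%N) ->
  (forall i j v, v \in verts_of_type c j -> F (rcons c (i, Some v)) = A + B i + G j v) ->
  (forall i j v, v \in verts_of_type c j -> `|F (rcons c (i, Some v)) - F c| <= D) ->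
  step_mean (fun c' => F c' ^+ 2) c <= F c ^+ 2 + 2 * F c * (step_mean F c - F c) + D ^+ 2.
Proof.
move=> types FE FD.
apply: (@le_trans _ _ (step_mean (fun c' => F c ^+ 2 + 2 * F c * (F c' - F c) + D ^+ 2) c)).
  apply: step_mean_le => i j v vj; set x := F (rcons _ _).
  have := FD i j v vj; rewrite -/x => xD.
  have : (x - F c) ^+ 2 <= D ^+ 2.
    by rewrite -real_normK ?num_real // ler_sqr ?nnegrE // (le_trans _ xD).
  lra.
rewrite (@step_mean_decomp _ _ (F c ^+ 2 + 2 * F c * (A - F c) + D ^+ 2)
   (fun i => 2 * F c * B i) (fun j v => 2 * F c * G j v)) // => [|i j v vj]; last first.
  by rewrite (FE i j v vj); ring.
rewrite (step_mean_decomp types FE).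
have pullB : \sum_i p i * (2 * F c * B i) = 2 * F c * \sum_i p i * B i.
  by rewrite big_distrr; apply: eq_bigr => i _ /=; ring.
have pullG : \sum_j attach j / ntype j c * \sum_(v <- verts_of_type c j) 2 * F c * G j v =
    2 * F c * \sum_j attach j / ntype j c * \sum_(v <- verts_of_type c j) G j v.
  by rewrite big_distrr; apply: eq_bigr => j _ /=; rewrite -big_distrr /=; ring.
by rewrite pullB pullG le_eqVlt; apply/orP; left; apply/eqP; ring.
Qed.

Lemma p_le1 j : p j <= 1.
Proof. by rewrite -sum_p (bigD1 j) //= lerDl sumr_ge0. Qed.

Definition dev (N : config K -> R) (a : R) c : R := N c - a * (size c)%:R.

Lemma dev_ntype_rcons c i j v :
  dev (ntype j) (p j) (rcons c (i, Some v)) = dev (ntype j) (p j) c - p j + (i == j)%:R.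
Proof. by rewrite /dev ntype_rcons size_rcons -natr1; ring. Qed.

Lemma step_mean_dev_ntype c j : wf_config c ->
  step_mean (dev (ntype j) (p j)) c = dev (ntype j) (p j) c.
Proof.
case=> types _; rewrite (@step_mean_decomp _ _ (dev (ntype j) (p j) c - p j)
  (fun i => (i == j)%:R) (fun _ _ => 0)) // => [|i j' v _]; last first.
  by rewrite dev_ntype_rcons addr0.
under eq_bigr => i _ do rewrite mulrC; rewrite sum_indicator.
by rewrite big1 => [|j' _]; rewrite ?big1 ?mulr0 ?addr0 ?subrK.
Qed.

Lemma step_mean_sqr_dev_ntype c j : wf_config c ->
  step_mean (fun c' => dev (ntype j) (p j) c' ^+ 2) c <= dev (ntype j) (p j) c ^+ 2 + 1.
Proof.
move=> wfc; have DE i j' v : v \in verts_of_type c j' ->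
    dev (ntype j) (p j) (rcons c (i, Some v)) =
    (dev (ntype j) (p j) c - p j) + (i == j)%:R + (fun _ _ => 0) j' v.
  by move=> _; rewrite dev_ntype_rcons addr0.
have := step_mean_sqr_le (D := 1) wfc.1 DE.
rewrite step_mean_dev_ntype // subrr mulr0 addr0 expr1n; apply=> i j' v vj'.
rewrite (DE i j' v vj') addr0 ler_norml.
have := p_le1 j; have := p_ge0 j.
by case: (i == j) => /= *; rewrite ?mulr1n ?mulr0n; apply/andP; split; lra.
Qed.

Lemma dev_ndeg_rcons c i j j' m a v : wf_config c -> v \in verts_of_type c j' ->
  dev (ndeg j m) a (rcons c (i, Some v)) =
  (dev (ndeg j m) a c - a) + (i == j)%:R * (m == 0%N)%:R + (j' == j)%:R * deg_gain m c v.
Proof.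
by move=> wfc vj'; rewrite /dev (ndeg_rcons _ _ _ _ wfc vj') size_rcons -natr1; ring.
Qed.

Lemma step_mean_dev_ndeg c j m a : wf_config c ->
  step_mean (dev (ndeg j m) a) c = dev (ndeg j m) a c - a + p j * (m == 0%N)%:R +
    attach j / ntype j c * (ndeg_prev j m c - ndeg j m c).
Proof.
move=> wfc.
rewrite (step_mean_decomp wfc.1 (fun i j' v => @dev_ndeg_rcons c i j j' m a v wfc)).
under eq_bigr => i _ do rewrite mulrCA; rewrite sum_indicator.
under eq_bigr => j' _ do rewrite -big_distrr /= mulrCA; rewrite sum_indicator.
by rewrite sum_deg_gain.
Qed.

Lemma rr_ge0 j : 0 <= rr p q j.
Proof. exact: divr_ge0 (attach_ge0 j) (p_ge0 j). Qed.

Definition geom j m : R := (1 + rr p q j)^-1 * (rr p q j / (1 + rr p q j)) ^+ m.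

Definition geom_prev j m : R := if m is m'.+1 then geom j m' else 0.

Definition cdeg j m : R := if p j == 0 then 0 else p j * geom j m.

Lemma ck_sum_cdeg k : ck p q k = \sum_j cdeg j k.
Proof. by apply: eq_bigr => j _; rewrite /cdeg mulrA. Qed.

Lemma geom_bounds j m : 0 <= geom j m <= 1.
Proof.
have r0 := rr_ge0 j; set r := rr p q j in r0 *; have r1 : 0 < 1 + r by lra.
have inv1 : (1 + r)^-1 <= 1 by rewrite invf_le1 //; lra.
have ratio1 : r / (1 + r) <= 1 by rewrite ler_pdivrMr //; lra.
have ratio0 : 0 <= r / (1 + r) by rewrite divr_ge0 // ltW.
have inv0 : 0 <= (1 + r)^-1 by rewrite invr_ge0 ltW.
rewrite /geom -/r mulr_ge0 ?exprn_ge0 //=.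
by rewrite mulr_ile1 ?exprn_ge0 ?exprn_ile1.
Qed.

Lemma geom_prev_bounds j m : 0 <= geom_prev j m <= 1.
Proof. by case: m => [|m]; rewrite /= ?lexx ?ler01 ?geom_bounds. Qed.

Lemma geom_balance j m : 0 < p j ->
  p j * geom j m = attach j * (geom_prev j m - geom j m) + p j * (m == 0%N)%:R.
Proof.
move=> pj0; have r0 := rr_ge0 j.
have -> : attach j = rr p q j * p j by rewrite /rr divfK ?gt_eqF.
rewrite /geom_prev /geom; set r := rr p q j in r0 *.
have r1 : 1 + r != 0 by rewrite gt_eqF //; lra.
by case: m => [|m] /=; rewrite ?expr0 ?exprS; field.
Qed.

Lemma step_drift_ndeg c j m : 0 < p j -> wf_config c ->
  step_mean (dev (ndeg j m) (p j * geom j m)) c - dev (ndeg j m) (p j * geom j m) c =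
  attach j * ((ndeg_prev j m c - ndeg j m c) / ntype j c - (geom_prev j m - geom j m)).
Proof.
move=> pj0 wfc; rewrite step_mean_dev_ndeg // geom_balance //.
have : ntype j c != 0 :> R by rewrite /ntype pnatr_eq0 -lt0n wfc.1.
by move=> M0; field.
Qed.

Lemma step_mean_sqr_dev_ndeg c j m : 0 < p j -> wf_config c ->
  step_mean (fun c' => dev (ndeg j m) (p j * geom j m) c' ^+ 2) c <=
  dev (ndeg j m) (p j * geom j m) c ^+ 2 +
  2 * attach j * (`|dev (ndeg_prev j m) (p j * geom_prev j m) c| +
                  3 * `|dev (ntype j) (p j) c|) + 9.
Proof.
move=> pj0 wfc; set a := p j * geom j m.
have /andP[g0 g1] := geom_bounds j m; have /andP[g'0 g'1] := geom_prev_bounds j m.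
have a01 : 0 <= a <= 1 by rewrite /a mulr_ge0 //= mulr_ile1 ?p_le1.
have := step_mean_sqr_le (D := 3) wfc.1
  (fun i j' v => @dev_ndeg_rcons c i j j' m a v wfc).
rewrite step_drift_ndeg // => sqr_le; apply: le_trans (sqr_le _) _ => [i j' v vj'|].
  rewrite (dev_ndeg_rcons _ _ _ _ wfc vj').
  have gain1 : `|(j' == j)%:R * deg_gain m c v : R| <= 1.
    rewrite normrM; case: (j' == j);
      by rewrite ?normr0 ?mul0r ?ler01 ?normr1 ?mul1r ?norm_deg_gain_le1.
  have b01 : 0 <= ((i == j)%:R * (m == 0%N)%:R : R) <= 1.
    by case: (i == j); case: (m == 0%N); rewrite ?mulr0 ?mul0r ?mulr1 ?lexx ?ler01.
  move: gain1 b01 a01; rewrite !ler_norml => /andP[? ?] /andP[? ?] /andP[? ?].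
  by apply/andP; split; lra.
have := @dev_mul_drift_le _ (ndeg j m c) (ndeg_prev j m c) (ntype j c)
  (p j * (size c)%:R) (geom j m) (geom_prev j m) (attach j).
rewrite ndeg_ge0 ndeg_le_ntype ndeg_prev_ge0 ndeg_prev_le_ntype g0 g1 g'0 g'1 attach_ge0.
rewrite ltr0n wfc.1 /dev /a => /(_ isT isT isT isT isT isT).
have -> : ndeg_prev j m c - p j * geom_prev j m * (size c)%:R =
  ndeg_prev j m c - geom_prev j m * (p j * (size c)%:R) by ring.
have -> : ndeg j m c - p j * geom j m * (size c)%:R =
  ndeg j m c - geom j m * (p j * (size c)%:R) by ring.
lra.
Qed.

End OneStep.

Section Moments.
Variables (R : realType) (K : nat) (p : 'I_K -> R) (q : 'I_K -> 'I_K -> R).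
Hypotheses (p_ge0 : forall i, 0 <= p i) (sum_p : \sum_i p i = 1)
  (q_ge0 : forall i j, 0 <= q i j) (sum_q : forall i, \sum_j q i j = 1).

Local Notation law n := (cmrt_law p q n).
Local Notation attach := (attach p q).
Local Notation geom := (geom p q).
Local Notation geom_prev := (geom_prev p q).
Local Notation cdeg := (cdeg p q).

Lemma cmrt_law_succ n : (K <= n)%N -> law n.+1 = step p q (law n).
Proof. by move=> Kn; rewrite /cmrt_law subSn. Qed.

Lemma cmrt_law_wf n : (K <= n)%N ->
  (forall x, x \in law n -> [/\ 0 <= x.1, wf_config x.2 & size x.2 = n]) /\
  expect (law n) (fun=> 1) <= 1.
Proof.
move=> /subnKC <-; elim: (n - K)%N => [|d [supp mass]].
  by rewrite addn0 /cmrt_law subnn; split; [apply: mem_init_law | apply: expect_init_law1].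
rewrite addnS cmrt_law_succ ?leq_addr //; split.
  move=> x /mem_step[y [i [j [v [yd vj ->]]]]] /=; have [y0 wfy sy] := supp y yd.
  split; last by rewrite size_rcons sy.
    by rewrite divr_ge0 ?mulr_ge0 ?ler0n.
  exact: wf_config_rcons wfy vj.
rewrite expect_step (eq_expect_in (g := fun=> 1)) // => x xd.
by have [_ [types _] _] := supp x xd; apply: step_mean1.
Qed.

Lemma cmrt_law_subprob n : (K <= n)%N -> subprob (law n).
Proof.
move=> /cmrt_law_wf[supp mass]; split=> // x xd.
by have [] := supp x xd.
Qed.

Lemma expect_law_succ_le n f g : (K <= n)%N ->
  (forall c, wf_config c -> size c = n -> step_mean p q f c <= g c) ->
  expect (law n.+1) f <= expect (law n) g.
Proof.
move=> Kn fg; have [supp _] := cmrt_law_wf Kn.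
rewrite cmrt_law_succ // expect_step.
by apply: ler_expect_in => [x /supp[]|x /supp[_ wfx sx]] //; apply: fg.
Qed.

Lemma dev_ntype_subquadratic j :
  subquadratic (fun n => expect (law n) (fun c => dev (ntype j) (p j) c ^+ 2)).
Proof.
apply: (subquadratic_of_increments (K0 := K) (b := fun=> 0) (C := 1)) => [n Kn|];
  last exact: sublinear0.
apply: le_trans (expect_law_succ_le (g := fun c => dev (ntype j) (p j) c ^+ 2 + 1) Kn _) _.
  by move=> c wfc _; apply: step_mean_sqr_dev_ntype.
by rewrite expectD addr0 lerD2l; have [] := cmrt_law_subprob Kn.
Qed.

Lemma dev_ndeg_subquadratic_of_prev j m : 0 < p j ->
  sublinear (fun n =>
    expect (law n) (fun c => `|dev (ndeg_prev j m) (p j * geom_prev j m) c|)) ->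
  subquadratic (fun n => expect (law n) (fun c => dev (ndeg j m) (p j * geom j m) c ^+ 2)).
Proof.
move=> pj0 prev; set X := dev (ndeg j m) (p j * geom j m).
set Xp := dev (ndeg_prev j m) (p j * geom_prev j m).
set Y := dev (ntype j) (p j).
have Y1 := expect_norm_sublinear cmrt_law_subprob (dev_ntype_subquadratic j).
have a0 : 0 <= 2 * attach j by rewrite mulr_ge0 ?attach_ge0.
apply: (subquadratic_of_increments (K0 := K) (C := 9) (b := fun n =>
    2 * attach j * (expect (law n) (fun c => `|Xp c|) +
                    3 * expect (law n) (fun c => `|Y c|)))) => [n Kn|]; last first.
  by apply: sublinearZ => //; apply: sublinearD prev (sublinearZ _ Y1).
apply: le_trans (expect_law_succ_le (g := fun c =>
  X c ^+ 2 + 2 * attach j * (`|Xp c| + 3 * `|Y c|) + 9) Kn _) _.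
  by move=> c wfc _; apply: step_mean_sqr_dev_ndeg.
rewrite expectD expectD expectZ expectD expectZ expect_cst lerD2l.
by have [_ mass] := cmrt_law_subprob Kn; rewrite ler_piMr.
Qed.

Lemma dev_ndeg_subquadratic j m : 0 < p j ->
  subquadratic (fun n => expect (law n) (fun c => dev (ndeg j m) (p j * geom j m) c ^+ 2)).
Proof.
move=> pj0; elim: m => [|m IH]; apply: dev_ndeg_subquadratic_of_prev => //.
  apply: (sublinear_le _ (@sublinear0 R)) => n; rewrite /expect big1 // => x _.
  by rewrite /dev /= mulr0 mul0r subr0 normr0 mulr0.
exact: expect_norm_sublinear cmrt_law_subprob IH.
Qed.

Lemma dev_cdeg_subquadratic j k :
  subquadratic (fun n => expect (law n) (fun c => dev (ndeg j k) (cdeg j k) c ^+ 2)).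
Proof.
rewrite /cdeg; case: (eqVneq (p j) 0) => [pj0|pjn0]; last first.
  by apply: dev_ndeg_subquadratic; rewrite lt_def pjn0 p_ge0.
apply: (subquadratic_le (K0 := K) _ (dev_ntype_subquadratic j)) => n Kn.
have [supp _] := cmrt_law_subprob Kn; apply: ler_expect_in => // x _.
by rewrite /dev pj0 !mul0r !subr0 ler_sqr ?nnegrE ?ndeg_le_ntype ?ndeg_ge0.
Qed.

Lemma cmrt_prob_le_sum_dev k eps n : 0 < eps -> (0 < n)%N -> (K <= n)%N ->
  cmrt_prob p q n (fun c => eps < `|(Nk k c)%:R / n%:R - ck p q k|) <=
  K%:R / (eps * n%:R) ^+ 2 *
    \sum_j expect (law n) (fun c => dev (ndeg j k) (cdeg j k) c ^+ 2).
Proof.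
move=> eps0 n0 Kn; have [supp _] := cmrt_law_wf Kn.
have x0 : 0 < (n%:R : R) by rewrite ltr0n.
have ex0 : 0 < eps * n%:R by rewrite mulr_gt0.
rewrite -expect_sum -expectZ; apply: prob_le_expect => [y /supp[]//|c|y yd].
  by rewrite mulr_ge0 ?divr_ge0 ?ler0n ?sqr_ge0 // sumr_ge0 // => j _; apply: sqr_ge0.
have [_ _ sy] := supp y yd; set S := \sum_j dev (ndeg j k) (cdeg j k) y.2.
have -> : (Nk k y.2)%:R / n%:R - ck p q k = S / n%:R.
  by rewrite natr_Nk ck_sum_cdeg /S /dev sumrB -big_distrl /= sy; field; rewrite gt_eqF.
have inv0 : 0 <= (n%:R : R)^-1 by rewrite invr_ge0 ltW.
rewrite normrM (ger0_norm inv0) ltr_pdivlMr // => lt_S.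
have : (eps * n%:R) ^+ 2 < S ^+ 2.
  rewrite -[ltRHS]real_normK ?num_real //; move: lt_S ex0 (normr_ge0 S).
  by set t := `|S|; set u := eps * _; nra.
have := sqr_sum_le_card (fun j => dev (ndeg j k) (cdeg j k) y.2); rewrite card_ord -/S.
rewrite mulrAC ler_pdivlMr ?exprn_gt0 // mul1r; lra.
Qed.

End Moments.

Theorem theorem3p5 (R : realType) (K : nat) (p : 'I_K -> R)
  (q : 'I_K -> 'I_K -> R)
  (hK : (2 <= K)%N)
  (hp0 : forall i, 0 <= p i)
  (hp1 : \sum_i p i = 1)
  (hpmax : forall i0 : 'I_K, val i0 = 0%N -> 0 < p i0 /\ forall j, p j <= p i0)
  (hq0 : forall i j, 0 <= q i j)
  (hq1 : forall i, \sum_j q i j = 1)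
  (k : nat) (eps delta : R) (heps : 0 < eps) (hdelta : 0 < delta) :
  exists N : nat, forall n : nat, (N <= n)%N -> (K <= n)%N ->
    cmrt_prob p q n
      (fun c => eps < `|(Nk k c)%:R / n%:R - ck p q k|) <= delta.
Proof.
(* [hK] only makes [K] positive. *)
have K0 : (0 < K%:R :> R) by rewrite ltr0n (leq_trans _ hK).
have [N small] := subquadratic_sum (index_enum 'I_K)
  (fun j => dev_cdeg_subquadratic hp0 hp1 hq0 hq1 j k)
  (divr_gt0 (mulr_gt0 hdelta (exprn_gt0 2 heps)) K0).
exists (maxn N 1) => n; rewrite geq_max => /andP[/small sum_le n0] Kn.
apply: le_trans (cmrt_prob_le_sum_dev hp0 hp1 hq0 hq1 k heps n0 Kn) _.
have en0 : 0 < (eps * n%:R) ^+ 2 by rewrite exprn_gt0 ?mulr_gt0 ?ltr0n.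
rewrite mulrAC ler_pdivrMr // -ler_pdivlMl //.
apply: le_trans sum_le _; rewrite le_eqVlt; apply/orP; left; apply/eqP.
by field; rewrite gt_eqF.
Qed.
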